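(* Let $S$ be a $\mathcal{C}$-semigroup. Then $\mathrm{SG}(S)=\max_{\le_S}\mathrm{FG}(S)$, the set of maximal elements of $\mathrm{FG}(S)$ with respect to $\le_S$.
   Context: An integer cone $\mathcal{C}\subseteq\mathbb{N}^p$ is the set of integer points of a finitely generated rational cone in $\mathbb{Q}_{\ge0}^p$. A $\mathcal{C}$-semigroup is a subset $S\subseteq\mathcal{C}$ containing $0$, closed under addition, with $\mathcal{C}\setminus S$ finite; $\mathcal{H}(S)=\mathcal{C}\setminus S$. $\mathbf x\le_S\mathbf y$ means $\mathbf y-\mathbf x\in S$. $\mathrm{PF}(S)=\{\mathbf x\in\mathcal{H}(S)\mid\mathbf x+(S\setminus\{0\})\subseteq S\}$, $\mathrm{SG}(S)=\{\mathbf x\in\mathrm{PF}(S)\mid 2\mathbf x\in S\}$, and $\mathrm{FG}(S)=\{\mathbf x\in\mathcal{H}(S)\mid 2\mathbf x\in S,\ 3\mathbf x\in S\}$. *)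

From mathcomp Require Import all_boot all_order all_algebra.
Set Implicit Arguments. Unset Strict Implicit. Unset Printing Implicit Defensive.
Import Order.TTheory GRing.Theory Num.Theory.
Local Open Scope ring_scope.

Definition vecZ (p : nat) := 'rV[int]_p.

(* C is the set of integer points of the cone in Q^p generated by finitely many
   rational vectors g_0..g_(k-1) with nonnegative entries (a rational cone in Q_{>=0}^p). *)
Definition is_integer_cone (p : nat) (C : vecZ p -> Prop) : Prop :=
  exists (k : nat) (g : 'I_k -> 'rV[rat]_p),
    (forall i j, 0 <= g i 0 j) /\
    forall x : vecZ p,
      C x <-> exists lam : 'I_k -> rat,
                (forall i, 0 <= lam i) /\
                map_mx (fun z : int => z%:~R : rat) x = \sum_(i < k) lam i *: g i.

Definition finite_set (T : eqType) (A : T -> Prop) : Prop :=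
  exists s : seq T, forall x, A x <-> x \in s.

Definition holes (p : nat) (C S : vecZ p -> Prop) (x : vecZ p) : Prop :=
  C x /\ ~ S x.

Definition is_C_semigroup (p : nat) (C S : vecZ p -> Prop) : Prop :=
  [/\ (forall x, S x -> C x),
      S 0,
      (forall x y, S x -> S y -> S (x + y)) &
      finite_set (holes C S)].

Definition leS (p : nat) (S : vecZ p -> Prop) (x y : vecZ p) : Prop := S (y - x).

Definition PF (p : nat) (C S : vecZ p -> Prop) (x : vecZ p) : Prop :=
  holes C S x /\ forall s, S s -> s <> 0 -> S (x + s).

Definition SG (p : nat) (C S : vecZ p -> Prop) (x : vecZ p) : Prop :=
  PF C S x /\ S (x *+ 2).

Definition FG (p : nat) (C S : vecZ p -> Prop) (x : vecZ p) : Prop :=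
  holes C S x /\ S (x *+ 2) /\ S (x *+ 3).

Definition maximalS (p : nat) (S A : vecZ p -> Prop) (x : vecZ p) : Prop :=
  A x /\ forall y, A y -> leS S x y -> y = x.

(* The proof only uses that S is a submonoid of C, that C is closed under
   addition (true of every integer cone), and that Z^p is torsion free:
   - an element of SG(S) lies in FG(S), since 3x = x + 2x with 2x <> 0;
   - a pseudo-Frobenius element is <=_S-maximal among all holes, hence
     in particular among FG(S);
   - if x is in FG(S) and s in S with x + s a hole, then x + s is again in
     FG(S); so a maximal x of FG(S) cannot have a nonzero s in S with
     x + s a hole, i.e. x is pseudo-Frobenius, and 2x in S gives x in SG(S). *)
From mathcomp Require Import all_boot all_order all_algebra.
From Stdlib Require Import Classical.
Set Implicit Arguments. Unset Strict Implicit. Unset Printing Implicit Defensive.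
Import Order.TTheory GRing.Theory Num.Theory.
Local Open Scope ring_scope.

(* The integer points of a rational cone are closed under addition:
   add the two families of nonnegative coefficients. *)
Lemma integer_cone_addr_closed (p : nat) (C : vecZ p -> Prop) :
  is_integer_cone C -> forall x y, C x -> C y -> C (x + y).
Proof.
move=> [k [g [_ HC]]] x y /HC [lx [lx_ge0 Ex]] /HC [ly [ly_ge0 Ey]].
apply/HC; exists (fun i => lx i + ly i); split.
  by move=> i; apply: addr_ge0.
have -> : map_mx (fun z : int => z%:~R : rat) (x + y) =
    map_mx (fun z : int => z%:~R : rat) x + map_mx (fun z : int => z%:~R : rat) y.
  by apply/matrixP => i j; rewrite !mxE intrD.
by rewrite Ex Ey -big_split; apply: eq_bigr => i _; rewrite scalerDl.
Qed.

Lemma mx_mulr2n_eq0 (R : numDomainType) (m n : nat) (x : 'M[R]_(m, n)) :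
  x *+ 2 = 0 -> x = 0.
Proof.
move=> /matrixP x2_0; apply/matrixP => i j.
by have /eqP := x2_0 i j; rewrite !mxE -mulr2n mulrn_eq0 => /eqP.
Qed.

Section GapsOfSubmonoid.

Variables (p : nat) (C S : vecZ p -> Prop).
Hypothesis C_addr : forall x y, C x -> C y -> C (x + y).
Hypothesis S_sub_C : forall x, S x -> C x.
Hypothesis S_0 : S 0.
Hypothesis S_addr : forall x y, S x -> S y -> S (x + y).

(* A symmetric gap is a fundamental gap: 3x = x + 2x and 2x is a nonzero
   element of S, because x itself is not in S while 0 is. *)
Lemma SG_FG (x : vecZ p) : SG C S x -> FG C S x.
Proof.
move=> [[[Cx nSx] x_PF] S2x]; split; first by split.
split=> //.
rewrite mulrS; apply: x_PF S2x _ => /mx_mulr2n_eq0 x0.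
by apply: nSx; rewrite x0; apply: S_0.
Qed.

(* A pseudo-Frobenius element is <=_S-maximal among all holes: if y - x is a
   nonzero element of S then y = x + (y - x) lies in S. *)
Lemma PF_maximal_hole (x y : vecZ p) :
  PF C S x -> holes C S y -> leS S x y -> y = x.
Proof.
move=> [_ x_PF] [_ nSy] le_xy; apply: NNPP => neq_yx; apply: nSy.
rewrite -(subrK x y) addrC; apply: x_PF le_xy _ => /eqP.
by rewrite subr_eq0 => /eqP.
Qed.

(* Fundamental gaps are stable under moving up by elements of S, as long as
   the result is still a hole: 2(x+s) = 2x + 2s and 3(x+s) = 3x + 3s. *)
Lemma FG_addS (x s : vecZ p) :
  FG C S x -> S s -> ~ S (x + s) -> FG C S (x + s).
Proof.
move=> [[Cx _] [S2x S3x]] Ss nSxs.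
have S2s : S (s *+ 2) by rewrite mulr2n; apply: S_addr.
have S3s : S (s *+ 3) by rewrite mulrS; apply: S_addr.
split; first by split=> //; apply: C_addr => //; apply: S_sub_C.
by split; rewrite mulrnDl; apply: S_addr.
Qed.

(* A <=_S-maximal fundamental gap is pseudo-Frobenius: otherwise some nonzero
   s in S gives the strictly larger fundamental gap x + s. *)
Lemma maximal_FG_PF (x : vecZ p) : maximalS S (FG C S) x -> PF C S x.
Proof.
move=> [x_FG x_max]; split; first exact: x_FG.1.
move=> s Ss s_neq0; apply: NNPP => nSxs.
have /x_max : FG C S (x + s) by apply: FG_addS.
rewrite /leS addrAC subrr add0r => /(_ Ss) xs_eq_x.
by apply: s_neq0; apply: (addrI x); rewrite addr0.
Qed.

End GapsOfSubmonoid.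

Theorem mainTheorem16 (p : nat) (C S : vecZ p -> Prop) :
  is_integer_cone C -> is_C_semigroup C S ->
  forall x : vecZ p, SG C S x <-> maximalS S (FG C S) x.
Proof.
move=> /integer_cone_addr_closed C_addr [S_sub_C S_0 S_addr _] x; split.
- move=> x_SG; split; first exact: SG_FG.
  by move=> y [y_hole _]; apply: PF_maximal_hole x_SG.1 y_hole.
- move=> x_max; split; first exact: maximal_FG_PF.
  by case: x_max => [[_ []]].
Qed.
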